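(* For all integers $n\ge0$ and real numbers $x\in(-1,1)$, $$0<\int_x^1\frac{T_{n+1}(t)\,U_n(t)}{\sqrt{1-t^2}}\,dt\le 1.$$ Equality holds on the right-hand side if and only if $n=0$ and $x=0$.
   Context: $T_j$ and $U_j$ denote the Chebyshev polynomials of the first and second kind of degree $j$: $T_j(\cos t)=\cos(jt)$ and $U_j(\cos t)=\sin((j+1)t)/\sin t$ for $t\in[0,\pi]$. *)

From Stdlib Require Import Reals.
Open Scope R_scope.

Fixpoint cheb_pair (a0 a1 t : R) (j : nat) : R * R :=
  match j with
  | O => (a0, a1)
  | S k => let (p, q) := cheb_pair a0 a1 t k in (q, 2 * t * q - p)
  end.

Definition ChebT (j : nat) (t : R) : R := fst (cheb_pair 1 t t j).
Definition ChebU (j : nat) (t : R) : R := fst (cheb_pair 1 (2 * t) t j).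

Definition improper_integral_to_1 (f : R -> R) (x L : R) : Prop :=
  (forall b, x <= b < 1 -> inhabited (Riemann_integrable f x b)) /\
  forall eps, eps > 0 -> exists delta, delta > 0 /\
    forall b (pr : Riemann_integrable f x b),
      x <= b < 1 -> 1 - delta < b -> Rabs (RiemannInt pr - L) < eps.

(* Put t = cos θ and S_n(θ) = Σ_{k<=n} sin((2k+1)θ)/(2k+1).  Since
   sin θ Σ_{k<=n} cos((2k+1)θ) = sin((n+1)θ) cos((n+1)θ), the integrand is the
   t-derivative of -S_n(acos t), so the integral is S_n(acos x); it converges because
   0 < S_n(θ) <= (n+1) sin θ.  Summation by parts with
   sin θ sin((2k+1)θ) = sin²((k+1)θ) - sin²(kθ) writes S_n as a positive combination of
   D_j = sin²(jθ)/sin θ, and the bounds D_j <= j² sin θ and D_j <= 1/sin θ, used below and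
   above the index where j sin θ crosses 1, give S_n <= 1, with equality only if
   k sin θ = 1 for some k.  For n >= 1 this is impossible when sin²θ = 1/2, and otherwise
   D_2 can be raised strictly within its bounds, so S_n < 1. *)

From Coquelicot Require Import Coquelicot.
From Stdlib Require Import Reals Lra Lia Nsatz.
Open Scope R_scope.

Lemma cheb_pair_S a0 a1 t k :
  cheb_pair a0 a1 t (S k) =
  (snd (cheb_pair a0 a1 t k),
   2 * t * snd (cheb_pair a0 a1 t k) - fst (cheb_pair a0 a1 t k)).
Proof. simpl. destruct (cheb_pair a0 a1 t k); reflexivity. Qed.

Lemma cheb_pair_cos th j :
  cheb_pair 1 (cos th) (cos th) j = (cos (INR j * th), cos (INR (S j) * th)).
Proof.
  induction j as [|j IH].
  - simpl. rewrite Rmult_0_l, cos_0, Rmult_1_l. reflexivity.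
  - rewrite cheb_pair_S, IH. cbn [fst snd]. f_equal.
    set (A := INR (S j) * th).
    replace (INR j * th) with (A - th) by (unfold A; rewrite S_INR; ring).
    replace (INR (S (S j)) * th) with (A + th) by (unfold A; rewrite !S_INR; ring).
    rewrite cos_plus, cos_minus. ring.
Qed.

Lemma ChebT_cos j th : ChebT j (cos th) = cos (INR j * th).
Proof. unfold ChebT. rewrite cheb_pair_cos. reflexivity. Qed.

Lemma cheb_pair_2cos_mul_sin th j :
  fst (cheb_pair 1 (2 * cos th) (cos th) j) * sin th = sin (INR (S j) * th) /\
  snd (cheb_pair 1 (2 * cos th) (cos th) j) * sin th = sin (INR (S (S j)) * th).
Proof.
  induction j as [|j [IH1 IH2]].
  - cbn [cheb_pair fst snd]. split.
    + simpl INR. rewrite !Rmult_1_l. reflexivity.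
    + replace (INR 2 * th) with (2 * th) by (simpl; ring). rewrite sin_2a. ring.
  - rewrite cheb_pair_S. cbn [fst snd]. split; [exact IH2|].
    set (p := cheb_pair 1 (2 * cos th) (cos th) j) in *.
    set (A := INR (S (S j)) * th) in *.
    replace (INR (S j) * th) with (A - th) in IH1 by (unfold A; rewrite !S_INR; ring).
    replace (INR (S (S (S j))) * th) with (A + th) by (unfold A; rewrite !S_INR; ring).
    replace ((2 * cos th * snd p - fst p) * sin th)
      with (2 * cos th * (snd p * sin th) - fst p * sin th) by ring.
    rewrite IH1, IH2, sin_plus, sin_minus. ring.
Qed.

Lemma ChebU_cos_mul_sin j th : ChebU j (cos th) * sin th = sin (INR (S j) * th).
Proof. apply cheb_pair_2cos_mul_sin. Qed.

Lemma cheb_pair_continuous (a1 : R -> R) : continuity a1 -> forall j,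
  continuity (fun t => fst (cheb_pair 1 (a1 t) t j)) /\
  continuity (fun t => snd (cheb_pair 1 (a1 t) t j)).
Proof.
  intros Ha j. induction j as [|j [IH1 IH2]].
  - split; [apply continuity_const; intros a b; reflexivity | exact Ha].
  - split; intros x.
    + apply (continuity_pt_ext (fun t => snd (cheb_pair 1 (a1 t) t j))); [|apply IH2].
      intros y. rewrite cheb_pair_S. reflexivity.
    + apply (continuity_pt_ext (minus_fct (mult_fct (mult_fct (fct_cte 2) id)
         (fun t => snd (cheb_pair 1 (a1 t) t j))) (fun t => fst (cheb_pair 1 (a1 t) t j)))).
      * intros y. rewrite cheb_pair_S. reflexivity.
      * apply continuity_pt_minus; [|apply IH1].
        apply continuity_pt_mult; [|apply IH2].
        apply continuity_pt_mult; [apply continuity_pt_const; intros a b; reflexivity|].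
        apply derivable_continuous_pt, derivable_pt_id.
Qed.

Lemma ChebT_continuous j : continuity (ChebT j).
Proof. exact (proj1 (cheb_pair_continuous id (derivable_continuous _ derivable_id) j)). Qed.

Lemma ChebU_continuous j : continuity (ChebU j).
Proof.
  refine (proj1 (cheb_pair_continuous (mult_fct (fct_cte 2) id) _ j)).
  apply continuity_mult; [apply continuity_const; intros a b; reflexivity|].
  apply derivable_continuous, derivable_id.
Qed.

Lemma odd_INR_pos k : 0 < 2 * INR k + 1.
Proof. pose proof (pos_INR k). lra. Qed.

Fixpoint sin_odd_sum (n : nat) (th : R) : R :=
  match n with
  | O => sin th
  | S k => sin_odd_sum k th + sin ((2 * INR (S k) + 1) * th) / (2 * INR (S k) + 1)
  end.

Fixpoint cos_odd_sum (n : nat) (th : R) : R :=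
  match n with
  | O => cos th
  | S k => cos_odd_sum k th + cos ((2 * INR (S k) + 1) * th)
  end.

Lemma cos_odd_sum_mul_sin n th :
  cos_odd_sum n th * sin th = sin (INR (S n) * th) * cos (INR (S n) * th).
Proof.
  induction n as [|n IH].
  - simpl. rewrite Rmult_1_l. ring.
  - cbn [cos_odd_sum]. rewrite Rmult_plus_distr_r, IH.
    set (A := INR (S n) * th).
    replace ((2 * INR (S n) + 1) * th) with (2 * A + th) by (unfold A; ring).
    replace (INR (S (S n)) * th) with (A + th) by (unfold A; rewrite (S_INR (S n)); ring).
    rewrite !cos_plus, !sin_plus, cos_2a, sin_2a.
    pose proof (sin2_cos2 th) as E. unfold Rsqr in E.
    nsatz.
Qed.

Lemma sin_odd_sum_derive n th : is_derive (sin_odd_sum n) th (cos_odd_sum n th).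
Proof.
  induction n as [|k IH].
  - simpl. auto_derive; [exact I | ring].
  - apply (is_derive_plus (sin_odd_sum k)
      (fun y => sin ((2 * INR (S k) + 1) * y) / (2 * INR (S k) + 1))); [exact IH|].
    pose proof (odd_INR_pos (S k)).
    set (c := 2 * INR (S k) + 1) in *.
    auto_derive; [exact I|]. field. lra.
Qed.

Lemma sin_mul_sin_2add A th : sin th * sin (2 * A + th) = sin (A + th) ^ 2 - sin A ^ 2.
Proof.
  pose proof (sin2_cos2 th) as E. unfold Rsqr in E.
  transitivity (sin (A + th) ^ 2 - sin A ^ 2 - sin A ^ 2 * (sin th * sin th + cos th * cos th - 1)).
  - rewrite !sin_plus, cos_2a, sin_2a. ring.
  - rewrite E. ring.
Qed.

(* [abel_sum D n] is Σ_{k<=n} (D (k+1) - D k) / (2k+1) summed by parts (with [D 0] dropped):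
   Σ_{j=1}^{n} D j (1/(2j-1) - 1/(2j+1)) + D (n+1) / (2n+1). *)
Definition abel_gap (j : nat) : R := 1 / (2 * INR j + 1) - 1 / (2 * INR j + 3).

Fixpoint abel_head (D : nat -> R) (n : nat) : R :=
  match n with O => 0 | S j => abel_head D j + abel_gap j * D (S j) end.

Definition abel_sum (D : nat -> R) (n : nat) : R :=
  abel_head D n + D (S n) / (2 * INR n + 1).

Lemma abel_gap_pos j : 0 < abel_gap j.
Proof.
  pose proof (pos_INR j). unfold abel_gap.
  replace (1 / (2 * INR j + 1) - 1 / (2 * INR j + 3))
    with (2 / ((2 * INR j + 1) * (2 * INR j + 3))) by (field; lra).
  apply Rdiv_lt_0_compat; nra.
Qed.

Lemma div_odd_le a b k : a <= b -> a / (2 * INR k + 1) <= b / (2 * INR k + 1).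
Proof.
  intros Hab. pose proof (odd_INR_pos k).
  unfold Rdiv. apply Rmult_le_compat_r; [left; apply Rinv_0_lt_compat|]; lra.
Qed.

Lemma abel_head_le D D' n : (forall j, D j <= D' j) -> abel_head D n <= abel_head D' n.
Proof.
  intros H. induction n as [|n IH]; cbn [abel_head]; [lra|].
  pose proof (abel_gap_pos n). pose proof (H (S n)). nra.
Qed.

Lemma abel_head_lt D D' n : (forall j, D j <= D' j) -> D 2%nat < D' 2%nat ->
  (2 <= n)%nat -> abel_head D n < abel_head D' n.
Proof.
  intros H H2 Hn. induction Hn as [|n Hn IH]; cbn [abel_head].
  - pose proof (abel_gap_pos 0). pose proof (abel_gap_pos 1). pose proof (H 1%nat). nra.
  - pose proof (abel_gap_pos n). pose proof (H (S n)). nra.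
Qed.

Lemma abel_sum_lt D D' n : (forall j, D j <= D' j) -> D 2%nat < D' 2%nat ->
  (1 <= n)%nat -> abel_sum D n < abel_sum D' n.
Proof.
  intros H H2 Hn. unfold abel_sum.
  destruct (Nat.eq_dec n 1) as [->|Hn1].
  - pose proof (abel_head_le D D' 1 H). simpl INR. lra.
  - pose proof (abel_head_lt D D' n H H2 ltac:(lia)).
    pose proof (div_odd_le _ _ n (H (S n))). lra.
Qed.

Lemma abel_head_pos D n : (forall j, 0 <= D j) -> 0 < D 1%nat -> (1 <= n)%nat ->
  0 < abel_head D n.
Proof.
  intros H0 H1 Hn. induction Hn as [|n Hn IH]; cbn [abel_head].
  - pose proof (abel_gap_pos 0). nra.
  - pose proof (abel_gap_pos n). pose proof (H0 (S n)). nra.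
Qed.

Lemma abel_sum_pos D n : (forall j, 0 <= D j) -> 0 < D 1%nat -> 0 < abel_sum D n.
Proof.
  intros H0 H1. unfold abel_sum.
  pose proof (div_odd_le _ _ n (H0 (S n))) as Htail.
  unfold Rdiv at 1 in Htail. rewrite Rmult_0_l in Htail.
  destruct n as [|n].
  - simpl. lra.
  - pose proof (abel_head_pos D (S n) H0 H1 ltac:(lia)). lra.
Qed.

Lemma nat_mul_crossing s n : s <= 1 -> 1 < INR (S n) * s ->
  exists q, (1 <= q <= n)%nat /\ INR q * s <= 1 /\ 1 < INR (S q) * s.
Proof.
  intros Hs1. induction n as [|n IH]; intros H.
  - simpl in H. lra.
  - destruct (Rlt_dec 1 (INR (S n) * s)) as [Hl|Hl].
    + destruct (IH Hl) as [q [Hq1 Hq2]]. exists q. split; [lia|exact Hq2].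
    + exists (S n). split; [lia|]. split; [lra|exact H].
Qed.

Definition abel_bounded (D : nat -> R) (s : R) : Prop :=
  forall j, 0 <= D j /\ D j <= INR j ^ 2 * s /\ D j <= 1 / s.

Section AbelBounds.

Variables (D : nat -> R) (s : R).
Hypothesis s_pos : 0 < s.
Hypothesis D_bounds : abel_bounded D s.

Lemma abel_head_le_quad n : abel_head D n <= s * (INR n * (INR n + 1) / (2 * INR n + 1)).
Proof.
  induction n as [|n IH]; cbn [abel_head]; [simpl; lra|].
  pose proof (abel_gap_pos n). pose proof (pos_INR n).
  destruct (D_bounds (S n)) as [_ [HDs _]].
  apply Rle_trans with
    (s * (INR n * (INR n + 1) / (2 * INR n + 1)) + abel_gap n * (INR (S n) ^ 2 * s)).
  - apply Rplus_le_compat; [exact IH|]. apply Rmult_le_compat_l; lra.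
  - right. unfold abel_gap. rewrite S_INR. field. lra.
Qed.

Lemma abel_sum_le_lin n : abel_sum D n <= INR (S n) * s.
Proof.
  unfold abel_sum. pose proof (pos_INR n).
  apply Rle_trans with (s * (INR n * (INR n + 1) / (2 * INR n + 1))
                        + (INR (S n) ^ 2 * s) / (2 * INR n + 1)).
  - apply Rplus_le_compat; [apply abel_head_le_quad | apply div_odd_le, D_bounds].
  - right. rewrite S_INR. field. lra.
Qed.

Lemma abel_tail_le q k X : X <= 1 / s ->
  abel_head D (q + k) + X / (2 * INR (q + k) + 1) <= abel_head D q + (1 / s) / (2 * INR q + 1).
Proof.
  revert X. induction k as [|k IH]; intros X HX.
  - rewrite Nat.add_0_r. apply Rplus_le_compat_l, div_odd_le, HX.
  - rewrite Nat.add_succ_r. cbn [abel_head].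
    set (N := (q + k)%nat) in *.
    pose proof (pos_INR N). pose proof (abel_gap_pos N).
    destruct (D_bounds (S N)) as [_ [_ HDs]].
    apply Rle_trans with (abel_head D N + (1 / s) / (2 * INR N + 1)); [|apply IH; lra].
    rewrite Rplus_assoc. apply Rplus_le_compat_l.
    apply Rle_trans with (abel_gap N * (1 / s) + (1 / s) / (2 * INR (S N) + 1)).
    + apply Rplus_le_compat; [apply Rmult_le_compat_l; lra | apply div_odd_le, HX].
    + right. unfold abel_gap. rewrite S_INR. field. lra.
Qed.

(* With [q s <= 1 < (q+1) s], bound [D j] by [j^2 s] for [j <= q] and by [1/s] beyond. *)
Lemma abel_sum_le_1_sub n : s <= 1 ->
  exists k c, 0 < c /\ INR k * s <= 1 /\ abel_sum D n <= 1 - (1 - INR k * s) * c.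
Proof.
  intros Hs1.
  destruct (Rle_dec (INR (S n) * s) 1) as [Hm|Hm].
  - exists (S n), 1. pose proof (abel_sum_le_lin n). repeat split; lra.
  - destruct (nat_mul_crossing s n Hs1 ltac:(lra)) as [q [Hq [Hq1 Hq2]]].
    rewrite S_INR in Hq2.
    pose proof (pos_INR q) as HQ.
    assert (Hb : abel_sum D n <=
                 s * (INR q * (INR q + 1) / (2 * INR q + 1)) + (1 / s) / (2 * INR q + 1)).
    { unfold abel_sum. replace n with (q + (n - q))%nat at 1 2 3 by lia.
      eapply Rle_trans; [apply abel_tail_le, D_bounds|].
      apply Rplus_le_compat_r, abel_head_le_quad. }
    exists q, (((INR q + 1) * s - 1) / (s * (2 * INR q + 1))).
    split; [apply Rdiv_lt_0_compat; nra|]. split; [exact Hq1|].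
    eapply Rle_trans; [exact Hb|]. right. field. lra.
Qed.

End AbelBounds.

Lemma abel_sum_le1 D s n : 0 < s -> s <= 1 -> abel_bounded D s -> abel_sum D n <= 1.
Proof.
  intros Hs Hs1 HD. destruct (abel_sum_le_1_sub D s Hs HD n Hs1) as [k [c [Hc [Hk Hle]]]].
  nra.
Qed.

Lemma abel_sum_eq1 D s n : 0 < s -> s <= 1 -> abel_bounded D s -> abel_sum D n = 1 ->
  exists k, INR k * s = 1.
Proof.
  intros Hs Hs1 HD E. destruct (abel_sum_le_1_sub D s Hs HD n Hs1) as [k [c [Hc [Hk Hle]]]].
  exists k. nra.
Qed.

(* Raising [D 2] to its largest admissible value strictly increases the sum,
   which nevertheless stays [<= 1]. *)
Lemma abel_sum_lt1 D s n : 0 < s -> s <= 1 -> abel_bounded D s -> (1 <= n)%nat ->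
  D 2%nat < Rmin (4 * s) (1 / s) -> abel_sum D n < 1.
Proof.
  intros Hs Hs1 HD Hn H2.
  set (D' := fun j => if Nat.eqb j 2 then Rmin (4 * s) (1 / s) else D j).
  assert (HD' : abel_bounded D' s).
  { intros j. unfold D'. destruct (Nat.eqb_spec j 2) as [->|Hj]; [|apply HD].
    pose proof (Rmin_l (4 * s) (1 / s)). pose proof (Rmin_r (4 * s) (1 / s)).
    pose proof (proj1 (HD 2%nat)). simpl INR. lra. }
  assert (Hle : forall j, D j <= D' j).
  { intros j. unfold D'. destruct (Nat.eqb_spec j 2) as [->|Hj]; lra. }
  pose proof (abel_sum_lt D D' n Hle H2 Hn).
  pose proof (abel_sum_le1 D' s n Hs Hs1 HD'). lra.
Qed.

Definition sin_sq_ratio (th : R) (j : nat) : R := sin (INR j * th) ^ 2 / sin th.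

Lemma sin_odd_sum_abel n th : sin th <> 0 -> sin_odd_sum n th = abel_sum (sin_sq_ratio th) n.
Proof.
  intros Hs. unfold abel_sum, sin_sq_ratio. induction n as [|k IH].
  - cbn [abel_head sin_odd_sum]. simpl INR. rewrite Rmult_1_l. field. exact Hs.
  - cbn [abel_head sin_odd_sum]. rewrite IH.
    pose proof (sin_mul_sin_2add (INR (S k) * th) th) as T.
    replace (2 * (INR (S k) * th) + th) with ((2 * INR (S k) + 1) * th) in T by ring.
    replace (INR (S k) * th + th) with (INR (S (S k)) * th) in T
      by (rewrite (S_INR (S k)); ring).
    replace (sin ((2 * INR (S k) + 1) * th))
      with ((sin (INR (S (S k)) * th) ^ 2 - sin (INR (S k) * th) ^ 2) / sin th)
      by (rewrite <- T; field; exact Hs).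
    pose proof (pos_INR k).
    unfold abel_gap. rewrite !S_INR. field. repeat split; (exact Hs || lra).
Qed.

Lemma Rabs_sin_mul_nat j th : Rabs (sin (INR j * th)) <= INR j * Rabs (sin th).
Proof.
  induction j as [|j IH].
  - simpl. rewrite Rmult_0_l, sin_0, Rabs_R0. lra.
  - rewrite S_INR. replace ((INR j + 1) * th) with (INR j * th + th) by ring.
    rewrite sin_plus.
    eapply Rle_trans; [apply Rabs_triang|]. rewrite !Rabs_mult.
    pose proof (Rabs_pos (sin (INR j * th))). pose proof (Rabs_pos (sin th)).
    assert (Rabs (cos th) <= 1) by (apply Rabs_le; apply COS_bound).
    assert (Rabs (cos (INR j * th)) <= 1) by (apply Rabs_le; apply COS_bound).
    nra.
Qed.

Lemma sin_sq_ratio_bounded th : 0 < sin th -> abel_bounded (sin_sq_ratio th) (sin th).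
Proof.
  intros Hs j. unfold sin_sq_ratio.
  pose proof (Rabs_sin_mul_nat j th) as B.
  rewrite (Rabs_pos_eq (sin th)) in B by lra.
  pose proof (pos_INR j).
  assert (Q : sin (INR j * th) ^ 2 <= (INR j * sin th) ^ 2).
  { rewrite <- (pow2_abs (sin (INR j * th))). pose proof (Rabs_pos (sin (INR j * th))). nra. }
  assert (Q1 : sin (INR j * th) ^ 2 <= 1) by (pose proof (SIN_bound (INR j * th)); nra).
  assert (Hi : 0 < / sin th) by (apply Rinv_0_lt_compat; lra).
  unfold Rdiv. repeat split.
  - apply Rmult_le_pos; [nra|lra].
  - replace (INR j ^ 2 * sin th) with ((INR j * sin th) ^ 2 * / sin th) by (field; lra). nra.
  - nra.
Qed.

Lemma sin_sq_ratio_1 th : 0 < sin th -> sin_sq_ratio th 1 = sin th.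
Proof. intros Hs. unfold sin_sq_ratio. simpl INR. rewrite Rmult_1_l. field. lra. Qed.

Lemma sin_sq_ratio_2 th : 0 < sin th -> sin_sq_ratio th 2 = 4 * sin th * (1 - sin th ^ 2).
Proof.
  intros Hs. unfold sin_sq_ratio.
  replace (INR 2 * th) with (2 * th) by (simpl; ring).
  rewrite sin_2a. pose proof (sin2_cos2 th) as E. unfold Rsqr in E.
  field_simplify; [nra | lra].
Qed.

Lemma sin_odd_sum_pos n th : 0 < sin th -> 0 < sin_odd_sum n th.
Proof.
  intros Hs. rewrite sin_odd_sum_abel by lra.
  apply abel_sum_pos; [apply sin_sq_ratio_bounded, Hs | rewrite sin_sq_ratio_1; lra].
Qed.

Lemma sin_odd_sum_le_lin n th : 0 < sin th -> sin_odd_sum n th <= INR (S n) * sin th.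
Proof.
  intros Hs. rewrite sin_odd_sum_abel by lra.
  exact (abel_sum_le_lin _ _ (sin_sq_ratio_bounded th Hs) n).
Qed.

Lemma sin_odd_sum_le1 n th : 0 < sin th -> sin_odd_sum n th <= 1.
Proof.
  intros Hs. rewrite sin_odd_sum_abel by lra.
  apply (abel_sum_le1 _ (sin th)); [exact Hs | apply SIN_bound | apply sin_sq_ratio_bounded, Hs].
Qed.

(* For [n >= 1]: if [sin th ^ 2 = 1/2], no [k] has [k * sin th = 1]; otherwise
   [sin_sq_ratio th 2 = 4 s (1 - s^2)] lies strictly below both [4 s] and [1/s]. *)
Lemma sin_odd_sum_eq1 n th : 0 < sin th -> sin_odd_sum n th = 1 -> n = 0%nat /\ sin th = 1.
Proof.
  intros Hs E. pose proof (SIN_bound th) as Hs1.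
  pose proof (sin_sq_ratio_bounded th Hs) as HD.
  destruct n as [|n].
  - split; [reflexivity | exact E].
  - exfalso. rewrite sin_odd_sum_abel in E by lra.
    set (s := sin th) in *.
    destruct (Req_dec (s ^ 2) (1 / 2)) as [Hh|Hh].
    + destruct (abel_sum_eq1 _ s _ Hs ltac:(lra) HD E) as [k Hk].
      assert (Hk2 : INR k ^ 2 * s ^ 2 = 1)
        by (replace (INR k ^ 2 * s ^ 2) with ((INR k * s) ^ 2) by ring; rewrite Hk; ring).
      rewrite Hh in Hk2.
      destruct k as [|[|k]]; [simpl in Hk2; lra | simpl in Hk2; lra |].
      assert (2 <= INR (S (S k))) by (rewrite !S_INR; pose proof (pos_INR k); lra).
      nra.
    + assert (H2 : sin_sq_ratio th 2 < Rmin (4 * s) (1 / s)).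
      { rewrite sin_sq_ratio_2 by exact Hs. fold s. apply Rmin_glb_lt.
        - assert (0 < s * s ^ 2) by (apply Rmult_lt_0_compat; [lra | apply pow_lt; lra]). nra.
        - apply (Rmult_lt_reg_r s); [lra|].
          replace (1 / s * s) with 1 by (field; lra).
          assert (Hne : 2 * s ^ 2 - 1 <> 0) by lra.
          pose proof (Rsqr_pos_lt _ Hne). unfold Rsqr in *. nra. }
      pose proof (abel_sum_lt1 _ s (S n) Hs ltac:(lra) HD ltac:(lia) H2). lra.
Qed.

Definition cheb_integrand (n : nat) (t : R) : R :=
  ChebT (S n) t * ChebU n t / sqrt (1 - t ^ 2).

Lemma sin_acos_sqrt t : -1 <= t <= 1 -> sin (acos t) = sqrt (1 - t ^ 2).
Proof. intros Ht. rewrite sin_acos by exact Ht. f_equal. unfold Rsqr. ring. Qed.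

Lemma sin_acos_pos t : -1 < t < 1 -> 0 < sin (acos t).
Proof. intros Ht. pose proof (acos_bound_lt t Ht). apply sin_gt_0; lra. Qed.

Lemma cheb_integrand_acos n t : -1 < t < 1 ->
  cheb_integrand n t = - (cos_odd_sum n (acos t) * (-1 / sqrt (1 - t²))).
Proof.
  intros Ht. pose proof (sin_acos_pos t Ht) as Hp.
  replace (t²) with (t ^ 2) by (unfold Rsqr; ring).
  unfold cheb_integrand. rewrite <- sin_acos_sqrt by lra.
  rewrite <- (cos_acos t) at 1 2 by lra.
  set (th := acos t) in *.
  rewrite ChebT_cos.
  replace (ChebU n (cos th)) with (sin (INR (S n) * th) / sin th)
    by (rewrite <- ChebU_cos_mul_sin; field; lra).
  replace (cos_odd_sum n th) with (sin (INR (S n) * th) * cos (INR (S n) * th) / sin th)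
    by (rewrite <- cos_odd_sum_mul_sin; field; lra).
  field. lra.
Qed.

Lemma cheb_integrand_continuous n t : -1 < t < 1 -> continuous (cheb_integrand n) t.
Proof.
  intros Ht. apply continuity_pt_filterlim.
  apply (continuity_pt_ext (div_fct (mult_fct (ChebT (S n)) (ChebU n))
                                    (comp sqrt (fun t => 1 - t ^ 2)))); [reflexivity|].
  apply continuity_pt_div.
  - apply continuity_pt_mult; [apply ChebT_continuous | apply ChebU_continuous].
  - apply continuity_pt_comp; [reg | apply continuity_pt_sqrt; nra].
  - unfold comp. apply Rgt_not_eq, sqrt_lt_R0. nra.
Qed.

Lemma sin_odd_sum_acos_derive n t : -1 < t < 1 ->
  is_derive (fun y => - sin_odd_sum n (acos y)) t (cheb_integrand n t).
Proof.
  intros Ht. apply is_derive_Reals.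
  rewrite (cheb_integrand_acos n t Ht).
  apply derivable_pt_lim_opp, (derivable_pt_lim_comp acos (sin_odd_sum n)).
  - apply (derive_pt_eq_1 _ _ _ (derivable_pt_acos t Ht)), derive_pt_acos.
  - apply is_derive_Reals, sin_odd_sum_derive.
Qed.

Lemma is_RInt_cheb_integrand n x b : -1 < x -> x <= b < 1 ->
  is_RInt (cheb_integrand n) x b (sin_odd_sum n (acos x) - sin_odd_sum n (acos b)).
Proof.
  intros Hx Hb.
  replace (sin_odd_sum n (acos x) - sin_odd_sum n (acos b))
    with (minus (- sin_odd_sum n (acos b)) (- sin_odd_sum n (acos x)))
    by (unfold minus, plus, opp; simpl; ring).
  apply (is_RInt_derive (fun y => - sin_odd_sum n (acos y)));
    intros y Hy; rewrite Rmin_left in Hy by lra; rewrite Rmax_right in Hy by lra.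
  - apply sin_odd_sum_acos_derive. lra.
  - apply cheb_integrand_continuous. lra.
Qed.

Lemma sin_odd_sum_acos_bound n b : -1 < b < 1 ->
  Rabs (sin_odd_sum n (acos b)) <= INR (S n) * sqrt (1 - b ^ 2).
Proof.
  intros Hb. pose proof (sin_acos_pos b Hb) as Hp.
  rewrite Rabs_pos_eq by (left; apply sin_odd_sum_pos, Hp).
  rewrite <- sin_acos_sqrt by lra. apply sin_odd_sum_le_lin, Hp.
Qed.

Lemma vanishes_at_1_of_sqrt_bound (G : R -> R) (C : R) : 0 < C ->
  (forall b, 0 < b < 1 -> Rabs (G b) <= C * sqrt (1 - b ^ 2)) ->
  forall eps, eps > 0 -> exists delta, delta > 0 /\
    forall b, 1 - delta < b < 1 -> Rabs (G b) < eps.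
Proof.
  intros HC HG eps Heps.
  assert (He : 0 < eps / C) by (apply Rdiv_lt_0_compat; lra).
  exists (Rmin 1 ((eps / C) ^ 2 / 2)). split.
  { apply Rmin_glb_lt; [lra | apply Rdiv_lt_0_compat; [apply pow_lt|]; lra]. }
  intros b Hb. pose proof (Rmin_l 1 ((eps / C) ^ 2 / 2)). pose proof (Rmin_r 1 ((eps / C) ^ 2 / 2)).
  assert (Hsq : sqrt (1 - b ^ 2) < eps / C).
  { rewrite <- (sqrt_pow2 (eps / C)) by lra. apply sqrt_lt_1_alt. nra. }
  apply Rle_lt_trans with (C * sqrt (1 - b ^ 2)); [apply HG; lra|].
  replace eps with (C * (eps / C)) by (field; lra).
  apply Rmult_lt_compat_l; lra.
Qed.

Lemma improper_integral_to_1_primitive (f G : R -> R) (x : R) :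
  (forall b, x <= b < 1 -> is_RInt f x b (G x - G b)) ->
  (forall eps, eps > 0 -> exists delta, delta > 0 /\
     forall b, 1 - delta < b < 1 -> Rabs (G b) < eps) ->
  improper_integral_to_1 f x (G x).
Proof.
  intros Hint Hvan. split.
  - intros b Hb. constructor. apply ex_RInt_Reals_0. eexists. apply Hint, Hb.
  - intros eps Heps. destruct (Hvan eps Heps) as [delta [Hd HG]].
    exists delta. split; [exact Hd|]. intros b pr Hb Hbd.
    rewrite <- RInt_Reals, (is_RInt_unique f x b (G x - G b)) by apply Hint, Hb.
    replace (G x - G b - G x) with (- G b) by ring.
    rewrite Rabs_Ropp. apply HG. lra.
Qed.

Theorem theorem4p5 (n : nat) (x : R) (hx : -1 < x < 1) :
  exists L : R,
    improper_integral_to_1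
      (fun t => ChebT (S n) t * ChebU n t / sqrt (1 - t ^ 2)) x L /\
    0 < L <= 1 /\
    (L = 1 <-> (n = 0%nat /\ x = 0)).
Proof.
  change (fun t => ChebT (S n) t * ChebU n t / sqrt (1 - t ^ 2)) with (cheb_integrand n).
  pose proof (sin_acos_pos x hx) as Hpos.
  exists (sin_odd_sum n (acos x)). split; [|split].
  - apply (improper_integral_to_1_primitive _ (fun y => sin_odd_sum n (acos y))).
    + intros b Hb. apply is_RInt_cheb_integrand; lra.
    + apply (vanishes_at_1_of_sqrt_bound _ (INR (S n))); [apply lt_0_INR; lia|].
      intros b Hb. apply sin_odd_sum_acos_bound. lra.
  - split; [apply sin_odd_sum_pos | apply sin_odd_sum_le1]; exact Hpos.
  - split.
    + intros E. destruct (sin_odd_sum_eq1 n _ Hpos E) as [Hn Hs1].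
      split; [exact Hn|].
      rewrite sin_acos_sqrt in Hs1 by lra.
      assert (Hsq : 1 - x ^ 2 = 1) by (rewrite <- (pow2_sqrt (1 - x ^ 2)) by nra; rewrite Hs1; ring).
      nra.
    + intros [-> ->]. rewrite acos_0. apply sin_PI2.
Qed.
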